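(* Let $P,Q\in\mathbb P_d$ and $R=P^{-1}\#Q^{-1}$. Then $\operatorname{F}_R(P,Q)=\operatorname{F}^{\mathrm M}(P,Q)$.
   Context: $\mathbb P_d$ is the set of $d\times d$ complex positive definite matrices; $A\#B:=A^{1/2}(A^{-1/2}BA^{-1/2})^{1/2}A^{1/2}$ is the matrix geometric mean. The generalized fidelity is $\operatorname{F}_R(P,Q):=\operatorname{Tr}\big[\sqrt{R^{1/2}PR^{1/2}}\,R^{-1}\sqrt{R^{1/2}QR^{1/2}}\big]$, and the Matsumoto fidelity is $\operatorname{F}^{\mathrm M}(P,Q):=\operatorname{Tr}[P\#Q]$. *)

From HB Require Import structures.
From mathcomp Require Import all_boot all_order all_algebra.
From mathcomp Require Import sesquilinear spectral.
From Stdlib Require Import ClassicalEpsilon.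
Set Implicit Arguments. Unset Strict Implicit. Unset Printing Implicit Defensive.
Import Order.TTheory GRing.Theory Num.Theory.
Local Open Scope ring_scope.

Section MatrixMeans.
Variable C : numClosedFieldType.
Variable d : nat.

Definition adjmx (A : 'M[C]_d) : 'M[C]_d := (map_mx Num.conj A)^T.
Definition adjrow (v : 'rV[C]_d) : 'cV[C]_d := (map_mx Num.conj v)^T.

Definition posdefmx (A : 'M[C]_d) : Prop :=
  adjmx A = A /\ forall v : 'rV[C]_d, v != 0 -> 0 < (v *m A *m adjrow v) 0 0.
Definition psdmx (A : 'M[C]_d) : Prop :=
  adjmx A = A /\ forall v : 'rV[C]_d, 0 <= (v *m A *m adjrow v) 0 0.

Definition sqrtmx (A : 'M[C]_d) : 'M[C]_d :=
  epsilon (inhabits 0) (fun B : 'M[C]_d => psdmx B /\ B *m B = A).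

Definition gmean (A B : 'M[C]_d) : 'M[C]_d :=
  let a := sqrtmx A in let ai := invmx a in
  a *m sqrtmx (ai *m B *m ai) *m a.

Definition fidR (R P Q : 'M[C]_d) : C :=
  let r := sqrtmx R in
  \tr (sqrtmx (r *m P *m r) *m invmx R *m sqrtmx (r *m Q *m r)).

Definition fidM (P Q : 'M[C]_d) : C := \tr (gmean P Q).

End MatrixMeans.

(* The geometric mean solves the Riccati equation
   R P R = Q^{-1}, so with r = R^{1/2} the congruences r P r and r Q r are
   inverse to each other and so are their square roots; the trace defining
   F_R(P, Q) then collapses by cyclicity to Tr R^{-1}. Finally inversion
   commutes with the geometric mean, R^{-1} = P # Q, whose trace is
   F^M(P, Q). *)
From HB Require Import structures.
From mathcomp Require Import all_boot all_order all_algebra.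
From mathcomp Require Import sesquilinear spectral.
From Stdlib Require Import ClassicalEpsilon.
Set Implicit Arguments. Unset Strict Implicit. Unset Printing Implicit Defensive.
Import Order.TTheory GRing.Theory Num.Theory.
Local Open Scope ring_scope.
Local Open Scope sesquilinear_scope.

Section PositiveMatrices.
Variables (C : numClosedFieldType) (d : nat).
Implicit Types (A B M U : 'M[C]_d) (v w : 'rV[C]_d).

Lemma adjmxE A : adjmx A = A^t*.
Proof. by rewrite /adjmx map_trmx. Qed.

Lemma adjrowE v : adjrow v = v^t*.
Proof. by rewrite /adjrow map_trmx. Qed.

Lemma trmxC_mul m n p (A : 'M[C]_(m, n)) (B : 'M[C]_(n, p)) :
  (A *m B)^t* = B^t* *m A^t*.
Proof. by rewrite trmx_mul map_mxM. Qed.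

Lemma trmxC_inv A : (invmx A)^t* = invmx (A^t*).
Proof. by rewrite trmx_inv map_invmx. Qed.

Lemma invmxM A B : A \in unitmx -> B \in unitmx ->
  invmx (A *m B) = invmx B *m invmx A.
Proof.
move=> uA uB; have uAB : A *m B \in unitmx by rewrite unitmx_mul uA.
rewrite -[RHS]mul1mx -(mulVmx uAB) -!mulmxA (mulmxA B) mulmxV // mul1mx.
by rewrite mulmxV // mulmx1.
Qed.

Lemma mulmx1_invmx A B : B \in unitmx -> A *m B = 1%:M -> A = invmx B.
Proof. by move=> uB AB1; rewrite -[A]mulmx1 -(mulmxV uB) mulmxA AB1 mul1mx. Qed.

Lemma dotmx_gt0 w : w != 0 -> 0 < (w *m adjrow w) 0 0.
Proof. by move/dotmx_is_dotmx; rewrite dotmxE adjrowE. Qed.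

Lemma dotmx_eq0 w : (w *m adjrow w) 0 0 = 0 -> w = 0.
Proof.
by move=> w0; have [//|/dotmx_gt0] := eqVneq w 0; rewrite w0 ltxx.
Qed.

Lemma psdmx_herm A : psdmx A -> A^t* = A.
Proof. by case=> hA _; rewrite -adjmxE. Qed.

Lemma psdmx_congr A M : psdmx A -> psdmx (M^t* *m A *m M).
Proof.
move=> pA; have [_ qA] := pA; split.
  by rewrite adjmxE !trmxC_mul trmxCK (psdmx_herm pA) mulmxA.
by move=> v; have := qA (v *m M^t*); rewrite !adjrowE !trmxC_mul trmxCK !mulmxA.
Qed.

Lemma psdmx_eigenvalue_ge0 A w (a : C) : psdmx A -> w != 0 ->
  w *m A = a *: w -> 0 <= a.
Proof.
move=> [_ qA] nw wA; have := qA w; rewrite wA -scalemxAl mxE.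
by rewrite pmulr_lge0 // dotmx_gt0.
Qed.

Definition pdmx A := psdmx A /\ A \in unitmx.

Lemma posdefmx_pdmx A : posdefmx A -> pdmx A.
Proof.
move=> [hA pA]; split.
  split=> // v; have [->|nv] := eqVneq v 0; first by rewrite !mul0mx mxE.
  exact/ltW/pA.
rewrite -row_free_unit; apply: inj_row_free => v vA0.
have [//|/pA] := eqVneq v 0; by rewrite vA0 mul0mx mxE ltxx.
Qed.

Lemma pdmx_inv A : pdmx A -> pdmx (invmx A).
Proof.
move=> [[hA qA] uA]; have hA' : (invmx A)^t* = invmx A.
  by rewrite trmxC_inv -adjmxE hA.
split; last by rewrite unitmx_inv.
split=> [|v]; first by rewrite adjmxE.
have := qA (v *m invmx A); rewrite adjrowE trmxC_mul hA' -adjrowE.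
by rewrite !mulmxA mulmxKV.
Qed.

Lemma pdmx_congr A M : pdmx A -> pdmx M -> pdmx (M *m A *m M).
Proof.
move=> [pA uA] [pM uM]; split; last by rewrite !unitmx_mul uA uM.
by rewrite -{1}(psdmx_herm pM); apply: psdmx_congr.
Qed.

Lemma psdmx_diag (s : 'rV[C]_d) : (forall j, 0 <= s 0 j) -> psdmx (diag_mx s).
Proof.
move=> s0; split.
  apply/matrixP => i j; rewrite !mxE; have [->|nij] := eqVneq i j.
    by rewrite !mulr1n geC0_conj.
  by rewrite !mulr0n conjC0.
move=> v; rewrite mul_mx_diag !mxE; apply: sumr_ge0 => j _.
by rewrite !mxE mulrAC mulr_ge0 // mul_conjC_ge0.
Qed.

Lemma psdmx_diag_ge0 (s : 'rV[C]_d) j : psdmx (diag_mx s) -> 0 <= s 0 j.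
Proof.
pose e : 'rV[C]_d := delta_mx 0 j.
suff <- : (e *m diag_mx s *m adjrow e) 0 0 = s 0 j by case.
rewrite /adjrow mul_mx_diag !mxE (bigD1 j) //= big1.
  by rewrite !mxE !eqxx conjC1 mulr1 addr0 mul1r.
by move=> k /negPf kj; rewrite !mxE eqxx /= kj !mul0r.
Qed.

Lemma row_diag_mx_mul (s : 'rV[C]_d) U i :
  row i (diag_mx s *m U) = s 0 i *: row i U.
Proof. by apply/rowP => j; rewrite mul_diag_mx !mxE. Qed.

(* If [w := v B - mu v] were nonzero it would be an eigenvector of the
   positive semidefinite [B] for the eigenvalue [-mu], forcing [mu = 0]; but
   then [w = v B] and [|v B|^2 = (v B B) v^* = 0]. *)
Lemma psdmx_eigen_sqr B v (mu : C) : psdmx B -> 0 <= mu ->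
  v *m B *m B = mu ^+ 2 *: v -> v *m B = mu *: v.
Proof.
move=> pB mu0 vBB; set w := v *m B - mu *: v.
have wB : w *m B = - mu *: w.
  by rewrite mulmxBl -scalemxAl vBB scaleNr scalerBr opprB scalerA -expr2.
apply/eqP; rewrite -subr_eq0 -/w; apply/eqP.
have [//|nw] := eqVneq w 0.
have := psdmx_eigenvalue_ge0 pB nw wB; rewrite oppr_ge0 => mu_le0.
have mu_eq0 : mu = 0 by apply/le_anti/andP.
apply: dotmx_eq0; rewrite /w mu_eq0 scale0r subr0 adjrowE trmxC_mul.
by rewrite (psdmx_herm pB) mulmxA vBB mu_eq0 expr0n scale0r mul0mx mxE.
Qed.

Lemma psdmx_sqrt_unique_spectral U (r : 'rV[C]_d) B :
  U \is unitarymx -> (forall j, 0 <= r 0 j) -> psdmx B ->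
  B *m B = U^t* *m (diag_mx r *m diag_mx r) *m U ->
  B = U^t* *m diag_mx r *m U.
Proof.
move=> uU r0 pB BB; suff UB : U *m B = diag_mx r *m U.
  rewrite -mulmxA -UB mulmxA -invmx_unitary // mulVmx ?mul1mx //.
  exact: unitarymx_unit.
apply/row_matrixP => i; rewrite row_mul row_diag_mx_mul.
apply: psdmx_eigen_sqr => //; rewrite -!row_mul -mulmxA BB !mulmxA.
by rewrite (unitarymxP uU) mul1mx mulmx_diag row_diag_mx_mul mxE expr2.
Qed.

Lemma unitary_conj_mul U (D E : 'M[C]_d) : U \is unitarymx ->
  (U^t* *m D *m U) *m (U^t* *m E *m U) = U^t* *m (D *m E) *m U.
Proof. by move=> uU; rewrite !mulmxA mulmxtVK // mulmxA. Qed.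

Lemma psdmx_sqrt_exists_unique A : psdmx A ->
  exists! B, psdmx B /\ B *m B = A.
Proof.
move=> pA; have hA : A \is hermsymmx.
  by rewrite is_hermitianmxE expr0 scale1r psdmx_herm.
have /orthomx_spectralP := hermitian_normalmx hA.
set U := spectralmx A; set s := spectral_diag A => eA.
have uU : U \is unitarymx by apply: spectral_unitarymx.
rewrite invmx_unitary // in eA.
have s0 j : 0 <= s 0 j.
  apply: psdmx_diag_ge0; have := psdmx_congr (U^t*) pA.
  by rewrite trmxCK eA !mulmxA mulmxtVK // (unitarymxP uU) mul1mx.
pose r := \row_j sqrtC (s 0 j).
have r0 j : 0 <= r 0 j by rewrite mxE sqrtC_ge0.
have rr : diag_mx r *m diag_mx r = diag_mx s.
  rewrite mulmx_diag; congr diag_mx.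
  by apply/rowP => j; rewrite !mxE -expr2 sqrtCK.
exists (U^t* *m diag_mx r *m U); split.
  split; first exact/psdmx_congr/psdmx_diag.
  by rewrite unitary_conj_mul // rr.
by move=> B [pB BB]; apply/esym/psdmx_sqrt_unique_spectral; rewrite // rr BB.
Qed.

Lemma sqrtmx_spec A : psdmx A -> psdmx (sqrtmx A) /\ sqrtmx A *m sqrtmx A = A.
Proof.
move=> /psdmx_sqrt_exists_unique [B [BA _]].
by apply: (epsilon_spec _ (fun X => psdmx X /\ X *m X = A)); exists B.
Qed.

Lemma sqrtmx_unique A B : psdmx A -> psdmx B -> B *m B = A -> sqrtmx A = B.
Proof.
move=> pA pB BB; have [B0 [_ uniqB0]] := psdmx_sqrt_exists_unique pA.
by rewrite -(uniqB0 _ (sqrtmx_spec pA)); apply: uniqB0.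
Qed.

Lemma sqrtmx_sqr A : psdmx A -> sqrtmx A *m sqrtmx A = A.
Proof. by case/sqrtmx_spec. Qed.

Lemma pdmx_sqrtmx A : pdmx A -> pdmx (sqrtmx A).
Proof.
move=> [pA uA]; split; first by case: (sqrtmx_spec pA).
by move: uA; rewrite -{1}(sqrtmx_sqr pA) unitmx_mul => /andP[].
Qed.

Lemma invmx_congr A M : A \in unitmx -> M \in unitmx ->
  invmx (M *m A *m M) = invmx M *m invmx A *m invmx M.
Proof. by move=> uA uM; rewrite !invmxM ?unitmx_mul ?uA ?uM // mulmxA. Qed.

Lemma sqrtmx_inv A : pdmx A -> sqrtmx (invmx A) = invmx (sqrtmx A).
Proof.
move=> pA; have pa := pdmx_sqrtmx pA; have [_ ua] := pa.
apply: sqrtmx_unique; first by case: (pdmx_inv pA).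
  by case: (pdmx_inv pa).
by rewrite -invmxM // sqrtmx_sqr //; case: pA.
Qed.

Lemma pdmx_gmean A B : pdmx A -> pdmx B -> pdmx (gmean A B).
Proof.
move=> pA pB; have pa := pdmx_sqrtmx pA; rewrite /gmean /=.
exact/(pdmx_congr _ pa)/pdmx_sqrtmx/(pdmx_congr pB)/pdmx_inv.
Qed.

Lemma gmean_riccati A B : pdmx A -> pdmx B ->
  gmean A B *m invmx A *m gmean A B = B.
Proof.
move=> pA pB; have [_ ua] := pdmx_sqrtmx pA; rewrite /gmean /=.
set a := sqrtmx A; set s := sqrtmx _.
have ss : s *m s = invmx a *m B *m invmx a.
  exact/sqrtmx_sqr/(proj1 (pdmx_congr pB (pdmx_inv (pdmx_sqrtmx pA)))).
rewrite -[A in invmx A](sqrtmx_sqr (proj1 pA)) -/a invmxM // !mulmxA.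
rewrite mulmxK // mulmxKV // -(mulmxA _ s s) ss !mulmxA mulmxV // mul1mx.
by rewrite mulmxKV.
Qed.

Lemma invmx_gmean A B : pdmx A -> pdmx B ->
  invmx (gmean A B) = gmean (invmx A) (invmx B).
Proof.
move=> pA pB; have pa := pdmx_sqrtmx pA; have [_ ua] := pa.
have pM := pdmx_congr pB (pdmx_inv pa); have [_ uM] := pM.
rewrite /gmean /= sqrtmx_inv // invmxK invmx_congr ?(proj2 (pdmx_sqrtmx pM)) //.
rewrite -(sqrtmx_inv pM); congr (_ *m sqrtmx _ *m _).
by rewrite invmx_congr ?unitmx_inv ?invmxK //; case: pB.
Qed.

Lemma fidR_riccati R P Q : pdmx R -> pdmx P -> pdmx Q ->
  R *m P *m R = invmx Q -> fidR R P Q = \tr (invmx R).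
Proof.
move=> pR pP pQ RPR; have [_ uR] := pR; have [_ uQ] := pQ.
have pr := pdmx_sqrtmx pR; have [_ ur] := pr; rewrite /fidR /=.
set r := sqrtmx R; have rr : r *m r = R by apply/sqrtmx_sqr; case: pR.
have pX := pdmx_congr pQ pr; have [_ uX] := pX.
have PRQ : P *m (R *m Q) = invmx R.
  have := congr1 (fun X => invmx R *m X *m Q) RPR.
  by rewrite /= !mulmxA mulVmx // mul1mx mulmxKV.
have -> : r *m P *m r = invmx (r *m Q *m r).
  apply: mulmx1_invmx => //; rewrite !mulmxA -(mulmxA _ r r) rr -(mulmxA _ R Q).
  by rewrite -(mulmxA r P) PRQ -rr invmxM // mulmxA mulmxKV // mulmxV.
have [_ usX] := pdmx_sqrtmx pX.
by rewrite sqrtmx_inv // mxtrace_mulC mulmxA mulmxV // mul1mx.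
Qed.

End PositiveMatrices.

Theorem mainTheorem8 (C : numClosedFieldType) (d : nat) (P Q : 'M[C]_d) :
  posdefmx P -> posdefmx Q ->
  fidR (gmean (invmx P) (invmx Q)) P Q = fidM P Q.
Proof.
move=> /posdefmx_pdmx pP /posdefmx_pdmx pQ.
have pPi := pdmx_inv pP; have pQi := pdmx_inv pQ.
rewrite (fidR_riccati (pdmx_gmean pPi pQi) pP pQ); last first.
  by rewrite -{2}(invmxK P) gmean_riccati.
by rewrite invmx_gmean // !invmxK.
Qed.
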